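(* Let $\mathfrak{g}_1,\mathfrak{g}_2$ be nilpotent Lie algebras of dimensions $m_1,m_2$ with $n_1,n_2$ generators as below. If $\mathfrak{g}_i$ is nonsplit for $i=1,2$, then the product by generators $\mathfrak{g}_1\underline{\times}\mathfrak{g}_2$ is an $(m_1+m_2+n_1n_2)$-dimensional nonsplit Lie algebra of nilindex $\max\{n(\mathfrak{g}_1),n(\mathfrak{g}_2)\}$.
   Context: All Lie algebras are finite-dimensional, complex, nilpotent and nonabelian. $C^1\mathfrak{g}=[\mathfrak{g},\mathfrak{g}]$, $C^{k+1}\mathfrak{g}=[\mathfrak{g},C^k\mathfrak{g}]$; the nilindex $n(\mathfrak{g})$ is the length of this central descending sequence (least $k$ with $C^k\mathfrak{g}=0$). A Lie algebra is nonsplit if it is not the direct sum of two nonzero ideals. Product by generators: take bases $\{X_1,\dots,X_{m_1}\}$ of $\mathfrak{g}_1$ and $\{X'_1,\dots,X'_{m_2}\}$ of $\mathfrak{g}_2$ such that $X_1,\dots,X_{n_1}$ generate $\mathfrak{g}_1$ and $X_{n_1+1},\dots,X_{m_1}$ span $C^1\mathfrak{g}_1$, and similarly $X'_1,\dots,X'_{n_2}$ generate $\mathfrak{g}_2$ and the remaining $X'_j$ span $C^1\mathfrak{g}_2$. Then $\mathfrak{g}_1\underline{\times}\mathfrak{g}_2$ is the Lie algebra on $\mathfrak{g}_1\oplus\mathfrak{g}_2\oplus\langle Z_1,\dots,Z_{n_1n_2}\rangle$ with the brackets of $\mathfrak{g}_1$ and of $\mathfrak{g}_2$, $[X_i,X'_j]=Z_{(i-1)n_2+j}$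 for $1\le i\le n_1$, $1\le j\le n_2$, $[X_i,X'_j]=0$ if $i>n_1$ or $j>n_2$, and the $Z_k$ central (the central extension of $\mathfrak{g}_1\oplus\mathfrak{g}_2$ by the corresponding 2-cocycle). *)

From HB Require Import structures.
From mathcomp Require Import all_boot all_order all_algebra.
Set Implicit Arguments. Unset Strict Implicit. Unset Printing Implicit Defensive.
Import Order.TTheory GRing.Theory Num.Theory.
Local Open Scope ring_scope.

(* A bilinear bracket on C^m, given by [e_i, e_j] = L i j. *)
Definition lie_str (C : fieldType) (m : nat) := 'I_m -> 'I_m -> 'rV[C]_m.

Section Lie.
Variables (C : fieldType) (m : nat) (L : lie_str C m).

Definition lbr (u v : 'rV[C]_m) : 'rV[C]_m :=
  \sum_(i < m) \sum_(j < m) (u 0 i * v 0 j) *: L i j.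

Definition is_lie : Prop :=
  (forall u, lbr u u = 0) /\
  (forall u v w, lbr u (lbr v w) + lbr v (lbr w u) + lbr w (lbr u v) = 0).

Definition brsp (U V : 'M[C]_m) : 'M[C]_m :=
  (\sum_(i < m) \sum_(j < m) <<lbr (row i U) (row j V)>>)%MS.

Fixpoint lcs (k : nat) : 'M[C]_m :=
  match k with
  | 0 => 1%:M
  | k'.+1 => brsp 1%:M (lcs k')
  end.

Definition nilpotent : Prop := exists k, \rank (lcs k) = 0%N.
Definition nonabelian : Prop := \rank (lcs 1) != 0%N.

Definition is_nilindex (k : nat) : Prop :=
  \rank (lcs k) = 0%N /\ forall j, (j < k)%N -> \rank (lcs j) != 0%N.

Definition ideal (I : 'M[C]_m) : Prop :=
  forall u v, (v <= I)%MS -> (lbr u v <= I)%MS.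

Definition nonsplit : Prop :=
  ~ exists I J : 'M[C]_m,
      [/\ ideal I, ideal J, \rank I != 0%N, \rank J != 0%N &
          \rank (I :&: J)%MS = 0%N /\ row_full (I + J)%MS].

Definition generates p (S : 'M[C]_(p, m)) : Prop :=
  forall V : 'M[C]_m, (S <= V)%MS ->
    (forall u v, (u <= V)%MS -> (v <= V)%MS -> (lbr u v <= V)%MS) ->
    row_full V.

End Lie.

Definition headspan (C : fieldType) m n : 'M[C]_m :=
  \matrix_(i < m, j < m) ((i == j) && (i < n)%N)%:R.
Definition tailspan (C : fieldType) m n : 'M[C]_m :=
  \matrix_(i < m, j < m) ((i == j) && (n <= i)%N)%:R.

(* the basis vector Z_{a n2 + b} (0-based indices) of C^(n1 n2), if a<n1, b<n2 *)
Definition zvec (C : fieldType) n1 n2 (a b : nat) : 'rV[C]_(n1 * n2) :=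
  \row_(k < n1 * n2) [&& (a < n1)%N, (b < n2)%N & (k == a * n2 + b :> nat)]%:R.

(* product by generators on g1 (+) g2 (+) <Z_1..Z_{n1 n2}> *)
Definition prodgen (C : fieldType) m1 m2 n1 n2
    (L1 : lie_str C m1) (L2 : lie_str C m2) : lie_str C (m1 + m2 + n1 * n2) :=
  fun i j =>
  match split i, split j with
  | inl i', inl j' =>
     match split i', split j' with
     | inl a, inl b => row_mx (row_mx (L1 a b) 0) 0
     | inr a, inr b => row_mx (row_mx 0 (L2 a b)) 0
     | inl a, inr b => row_mx 0 (zvec C n1 n2 a b)
     | inr b, inl a => - row_mx 0 (zvec C n1 n2 a b)
     end
  | _, _ => 0
  end.

Arguments prodgen {C m1 m2} n1 n2 L1 L2.

From Pilot Require Import Defs.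
From HB Require Import structures.
From mathcomp Require Import all_boot all_order all_algebra.
From mathcomp Require Import zify.
Set Implicit Arguments. Unset Strict Implicit. Unset Printing Implicit Defensive.
Import Order.TTheory GRing.Theory Num.Theory.
Local Open Scope ring_scope.

(* Writing elements of the product as triples (x, y, z) with z in Z, the bracket
   is [(x,y,z), (x',y',z')] = ([x,x'], [y,y'], x (x) y' - x' (x) y), where the
   tensor only sees the generator coordinates.  Brackets in g_i have no
   generator coordinates, which gives the Jacobi identity, and shows that the
   Z-part of C^2 vanishes; as the projections onto and embeddings of g1, g2 are
   homomorphisms, C^k = C^k g1 (+) C^k g2 for k >= 2, whence the nilindex.
   If L = I (+) J with ideals I, J, then [I, J] = 0, so every 2x2 minor
   x_a(u) y_b(v) - x_a(v) y_b(u) with u in I, v in J vanishes.  Decomposing a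
   generator of g1 and one of g2 along I (+) J then shows that one of I, J has
   no generator coordinates, i.e. lies in [L, L]; but a direct summand of a
   nilpotent Lie algebra contained in its derived algebra is zero. *)

Section Bracket.
Variables (C : fieldType) (m : nat) (L : lie_str C m).
Local Notation lbr := (lbr L).

Lemma lbrDl u u' v : lbr (u + u') v = lbr u v + lbr u' v.
Proof.
rewrite /Defs.lbr -big_split; apply: eq_bigr => i _.
by rewrite -big_split; apply: eq_bigr => j _; rewrite mxE mulrDl scalerDl.
Qed.

Lemma lbrDr u v v' : lbr u (v + v') = lbr u v + lbr u v'.
Proof.
rewrite /Defs.lbr -big_split; apply: eq_bigr => i _.
by rewrite -big_split; apply: eq_bigr => j _; rewrite mxE mulrDr scalerDl.
Qed.

Lemma lbrZl a u v : lbr (a *: u) v = a *: lbr u v.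
Proof.
rewrite /Defs.lbr scaler_sumr; apply: eq_bigr => i _.
by rewrite scaler_sumr; apply: eq_bigr => j _; rewrite mxE scalerA mulrA.
Qed.

Lemma lbrZr a u v : lbr u (a *: v) = a *: lbr u v.
Proof.
rewrite /Defs.lbr scaler_sumr; apply: eq_bigr => i _.
by rewrite scaler_sumr; apply: eq_bigr => j _; rewrite mxE scalerA mulrCA.
Qed.

Lemma lbr0l v : lbr 0 v = 0.
Proof. by have := lbrZl 0 0 v; rewrite !scale0r. Qed.

Lemma lbr0r u : lbr u 0 = 0.
Proof. by have := lbrZr 0 u 0; rewrite !scale0r. Qed.

Lemma lbr_suml (I : Type) (r : seq I) (P : pred I) (F : I -> 'rV_m) v :
  lbr (\sum_(k <- r | P k) F k) v = \sum_(k <- r | P k) lbr (F k) v.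
Proof. exact: (big_morph _ (fun x y => lbrDl x y v) (lbr0l v)). Qed.

Lemma lbr_sumr (I : Type) (r : seq I) (P : pred I) (F : I -> 'rV_m) u :
  lbr u (\sum_(k <- r | P k) F k) = \sum_(k <- r | P k) lbr u (F k).
Proof. exact: (big_morph _ (lbrDr u) (lbr0r u)). Qed.

Lemma lbr_anticomm : (forall u, lbr u u = 0) -> forall u v, lbr u v = - lbr v u.
Proof.
move=> alt u v; apply/eqP; rewrite -subr_eq0 opprK.
by have := alt (u + v); rewrite lbrDl !lbrDr !alt add0r addr0 => ->.
Qed.

Lemma lbr_sub_brsp (U V : 'M_m) u v :
  (u <= U)%MS -> (v <= V)%MS -> (lbr u v <= brsp L U V)%MS.
Proof.
move=> /submxP[a ->] /submxP[b ->].
rewrite !mulmx_sum_row lbr_suml; apply: summx_sub => i _.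
rewrite lbr_sumr; apply: summx_sub => j _.
rewrite lbrZl lbrZr; do 2 apply: scalemx_sub.
by apply: (sumsmx_sup i) => //; apply: (sumsmx_sup j) => //; rewrite genmxE.
Qed.

Lemma brspMr_sub p q (U V : 'M_m) (F : 'M_(m, p)) (W : 'M_(q, p)) :
  (forall u v, (u <= U)%MS -> (v <= V)%MS -> (lbr u v *m F <= W)%MS) ->
  (brsp L U V *m F <= W)%MS.
Proof.
move=> sub_uv; rewrite /brsp; elim/big_rec: _ => [|i S _ sub_S].
  by rewrite mul0mx sub0mx.
rewrite addsmxMr addsmx_sub sub_S andbT; elim/big_rec: _ => [|j T _ sub_T].
  by rewrite mul0mx sub0mx.
by rewrite addsmxMr addsmx_sub sub_T andbT (eqmxMr _ (genmxE _)) sub_uv ?row_sub.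
Qed.

Lemma brsp_sub q (U V : 'M_m) (W : 'M_(q, m)) :
  (forall u v, (u <= U)%MS -> (v <= V)%MS -> (lbr u v <= W)%MS) ->
  (brsp L U V <= W)%MS.
Proof.
by move=> sub_uv; rewrite -[brsp _ _ _]mulmx1; apply: brspMr_sub => u v *; rewrite mulmx1 sub_uv.
Qed.

Lemma brspS (U V U' V' : 'M_m) :
  (U <= U')%MS -> (V <= V')%MS -> (brsp L U V <= brsp L U' V')%MS.
Proof.
move=> sUU' sVV'; apply: brsp_sub => u v sUu sVv.
by apply: lbr_sub_brsp; [apply: submx_trans sUU' | apply: submx_trans sVV'].
Qed.

Lemma lcs_sub i j : (i <= j)%N -> (lcs L j <= lcs L i)%MS.
Proof.
have lcsSn k : (lcs L k.+1 <= lcs L k)%MS.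
  by elim: k => [|k IH]; [exact: submx1 | exact: brspS (submx_refl _) IH].
move=> /subnK <-; elim: (j - i)%N => [|d IH]; first by rewrite add0n.
by rewrite addSn; apply: submx_trans IH.
Qed.

Lemma lcs_eq0_leq i j : \rank (lcs L i) = 0%N -> (i <= j)%N -> lcs L j = 0.
Proof.
move=> /eqP; rewrite mxrank_eq0 => /eqP lcs_i0 /lcs_sub.
by rewrite lcs_i0 => /submx0null.
Qed.

Section Complement.
Variables (I J : 'M[C]_m).
Hypotheses (lieL : is_lie L) (idI : ideal L I) (idJ : ideal L J).
Hypotheses (capIJ : (I :&: J)%MS = 0) (fullIJ : row_full (I + J)%MS).

Lemma lbr_complement u v : (u <= I)%MS -> (v <= J)%MS -> lbr u v = 0.
Proof.
move=> sIu sJv; apply/eqP; rewrite -submx0 -capIJ sub_capmx idJ // andbT.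
by rewrite (lbr_anticomm lieL.1) eqmx_opp idI.
Qed.

Lemma lcs1_sub_complement : (lcs L 1 <= I + brsp L J J)%MS.
Proof.
apply: brsp_sub => u v _ _.
have /sub_addsmxP[[a b] /= ->] := submx_full u fullIJ.
have /sub_addsmxP[[c d] /= ->] := submx_full v fullIJ.
rewrite !lbrDl !lbrDr (@lbr_complement (a *m I) (d *m J)) ?submxMl // addr0.
rewrite (lbr_anticomm lieL.1 (b *m J)) (@lbr_complement (c *m I)) ?submxMl // oppr0 add0r.
by apply: addmx_sub_adds; [apply: idI | apply: lbr_sub_brsp]; rewrite submxMl.
Qed.

(* [L, L] <= I + [J, J] and I :&: J = 0 give J <= [J, J], so J lies in
   every term of the central descending sequence. *)
Lemma derived_summand_eq0 : nilpotent L -> (J <= lcs L 1)%MS -> J = 0.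
Proof.
move=> [K lcsK0] sJ1.
have sJJ : (brsp L J J <= J)%MS by apply: brsp_sub => u v _; apply: idJ.
suff sJ k : (J <= lcs L k)%MS.
  by apply/eqP; rewrite -submx0 (submx_trans (sJ K)) // submx0 -mxrank_eq0 lcsK0.
elim: k => [|k IH]; first exact: submx1.
apply/row_subP => i; have sJv := row_sub i J.
have /sub_addsmxP[[a b] /= def_v] := submx_trans sJv (submx_trans sJ1 lcs1_sub_complement).
have sJb : (b *m brsp L J J <= J)%MS by apply: submx_trans (submxMl _ _) sJJ.
rewrite def_v; suff -> : a *m I = 0 by rewrite add0r (submx_trans (submxMl _ _)) // brspS ?submx1.
apply/eqP; rewrite -submx0 -capIJ sub_capmx submxMl /=.
by rewrite -[a *m I](addrK (b *m brsp L J J)) -def_v addmx_sub // eqmx_opp.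
Qed.

End Complement.

End Bracket.

Lemma lcs_morph (C : fieldType) m m' (L : lie_str C m) (L' : lie_str C m') (F : 'M_(m, m')) :
  (forall u v, lbr L' (u *m F) (v *m F) = lbr L u v *m F) ->
  forall k, (lcs L k *m F <= lcs L' k)%MS.
Proof.
move=> hom; elim=> [|k IH] /=; first exact: submx1.
apply: brspMr_sub => u v _ sv; rewrite -hom.
by apply: lbr_sub_brsp; [exact: submx1 | exact: submx_trans (submxMr F sv) IH].
Qed.

Section BlockMatrices.
Variables (C : fieldType) (m1 m2 n1 n2 : nat).
Local Notation m := (m1 + m2 + n1 * n2)%N.

Definition blk3 p (x : 'M[C]_(p, m1)) (y : 'M[C]_(p, m2)) (z : 'M[C]_(p, n1 * n2))
  : 'M[C]_(p, m) := row_mx (row_mx x y) z.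

Definition idx1 (a : 'I_m1) : 'I_m := lshift (n1 * n2) (lshift m2 a).
Definition idx2 (b : 'I_m2) : 'I_m := lshift (n1 * n2) (rshift m1 b).
Definition idx3 (c : 'I_(n1 * n2)) : 'I_m := rshift (m1 + m2) c.

Definition emb1 : 'M[C]_(m1, m) := blk3 1%:M 0 0.
Definition emb2 : 'M[C]_(m2, m) := blk3 0 1%:M 0.
Definition emb3 : 'M[C]_(n1 * n2, m) := blk3 0 0 1%:M.
Definition prj1 : 'M[C]_(m, m1) := col_mx (col_mx 1%:M 0) 0.
Definition prj2 : 'M[C]_(m, m2) := col_mx (col_mx 0 1%:M) 0.
Definition prj3 : 'M[C]_(m, n1 * n2) := col_mx 0 1%:M.

Section BlockAlgebra.
Variable p : nat.
Implicit Types (x : 'M[C]_(p, m1)) (y : 'M[C]_(p, m2)) (z : 'M[C]_(p, n1 * n2)).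

Lemma blk3D x y z x' y' z' : blk3 x y z + blk3 x' y' z' = blk3 (x + x') (y + y') (z + z').
Proof. by rewrite /blk3 !add_row_mx. Qed.

Lemma blk3Z a x y z : a *: blk3 x y z = blk3 (a *: x) (a *: y) (a *: z).
Proof. by rewrite /blk3 !scale_row_mx. Qed.

Lemma blk3N x y z : - blk3 x y z = blk3 (- x) (- y) (- z).
Proof. by rewrite /blk3 !opp_row_mx. Qed.

Lemma blk30 : blk3 0 0 0 = 0 :> 'M_(p, m).
Proof. by rewrite /blk3 !row_mx0. Qed.

Lemma blk3_sum (I : Type) (r : seq I) (P : pred I) (F : I -> 'M_(p, m1)) G H :
  \sum_(i <- r | P i) blk3 (F i) (G i) (H i) =
  blk3 (\sum_(i <- r | P i) F i) (\sum_(i <- r | P i) G i) (\sum_(i <- r | P i) H i).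
Proof.
elim: r => [|i r IH]; first by rewrite !big_nil blk30.
by rewrite !big_cons; case: (P i); rewrite ?IH ?blk3D.
Qed.

Lemma blk3_idx1 x y z i a : blk3 x y z i (idx1 a) = x i a.
Proof. by rewrite /blk3 /idx1 !row_mxEl. Qed.

Lemma blk3_idx2 x y z i b : blk3 x y z i (idx2 b) = y i b.
Proof. by rewrite /blk3 /idx2 row_mxEl row_mxEr. Qed.

Lemma blk3_prj1 x y z : blk3 x y z *m prj1 = x.
Proof. by rewrite /blk3 /prj1 !mul_row_col mulmx1 !mulmx0 !addr0. Qed.

Lemma blk3_prj2 x y z : blk3 x y z *m prj2 = y.
Proof. by rewrite /blk3 /prj2 !mul_row_col mulmx1 !mulmx0 add0r addr0. Qed.

Lemma blk3_prj3 x y z : blk3 x y z *m prj3 = z.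
Proof. by rewrite /blk3 /prj3 mul_row_col mulmx1 mulmx0 add0r. Qed.

Lemma blk3_prjK (A : 'M[C]_(p, m)) : blk3 (A *m prj1) (A *m prj2) (A *m prj3) = A.
Proof.
have -> : A = blk3 (lsubmx (lsubmx A)) (rsubmx (lsubmx A)) (rsubmx A).
  by rewrite /blk3 !hsubmxK.
by rewrite blk3_prj1 blk3_prj2 blk3_prj3.
Qed.

Lemma prj1_idx (A : 'M[C]_(p, m)) i a : (A *m prj1) i a = A i (idx1 a).
Proof. by rewrite -{2}[A]blk3_prjK blk3_idx1. Qed.

Lemma prj2_idx (A : 'M[C]_(p, m)) i b : (A *m prj2) i b = A i (idx2 b).
Proof. by rewrite -{2}[A]blk3_prjK blk3_idx2. Qed.

Lemma mul_emb1 x : x *m emb1 = blk3 x 0 0.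
Proof. by rewrite /emb1 /blk3 !mul_mx_row mulmx1 !mulmx0. Qed.

Lemma mul_emb2 y : y *m emb2 = blk3 0 y 0.
Proof. by rewrite /emb2 /blk3 !mul_mx_row mulmx1 !mulmx0. Qed.

Lemma mul_emb3 z : z *m emb3 = blk3 0 0 z.
Proof. by rewrite /emb3 /blk3 !mul_mx_row mulmx1 !mulmx0. Qed.

Lemma blk3_emb x y z : blk3 x y z = x *m emb1 + y *m emb2 + z *m emb3.
Proof. by rewrite mul_emb1 mul_emb2 mul_emb3 !blk3D !addr0 !add0r. Qed.

End BlockAlgebra.

Lemma row_free_emb1 : row_free emb1.
Proof. by apply/row_freeP; exists prj1; exact: blk3_prj1. Qed.

Lemma row_free_emb2 : row_free emb2.
Proof. by apply/row_freeP; exists prj2; exact: blk3_prj2. Qed.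

End BlockMatrices.

Lemma sub_tailspanP (C : fieldType) p n (v : 'rV[C]_p) :
  reflect (forall k : 'I_p, (k < n)%N -> v 0 k = 0) (v <= tailspan C p n)%MS.
Proof.
apply: (iffP idP) => [/submxP[w ->] k lt_kn | v_head0].
  rewrite !mxE big1 // => i _; rewrite mxE.
  by case: eqP => [->|_]; rewrite ?(leqNgt n) ?lt_kn mulr0.
suff -> : v = v *m tailspan C p n by apply: submxMl.
apply/rowP => k; rewrite !mxE (bigD1 k) //= big1 => [|i /negPf ne_ik]; last first.
  by rewrite mxE ne_ik mulr0.
rewrite mxE eqxx addr0; case: (leqP n k) => [_|lt_kn]; first by rewrite mulr1.
by rewrite v_head0 // mul0r.
Qed.

Lemma mulnD_inj n a b a' b' :
  (b < n)%N -> (b' < n)%N -> (a * n + b = a' * n + b')%N -> a = a' /\ b = b'.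
Proof.
move=> lt_bn lt_b'n e; have n_gt0 : (0 < n)%N by apply: leq_ltn_trans lt_bn.
have := congr1 (divn^~ n) e; have := congr1 (modn^~ n) e.
by rewrite !modnMDl !modn_small // !divnMDl // !divn_small // !addn0.
Qed.

Section ZBracket.
Variables (C : fieldType) (m1 m2 n1 n2 : nat).
Local Notation zvec := (zvec C n1 n2).

Definition zbr (x : 'rV[C]_m1) (y : 'rV[C]_m2) : 'rV[C]_(n1 * n2) :=
  \sum_(a < m1) \sum_(b < m2) (x 0 a * y 0 b) *: zvec a b.

Lemma zvec_coord a b a0 b0 (k : 'I_(n1 * n2)) :
  (a0 < n1)%N -> (b0 < n2)%N -> k = (a0 * n2 + b0)%N :> nat ->
  zvec a b 0 k = ((a == a0) && (b == b0))%:R.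
Proof.
move=> lt_a0 lt_b0 def_k; rewrite mxE def_k; congr (nat_of_bool _)%:R.
apply/idP/idP => [/and3P[_ lt_b /eqP/(mulnD_inj lt_b0 lt_b)[-> ->]] | /andP[/eqP-> /eqP->]].
  by rewrite !eqxx.
by rewrite lt_a0 lt_b0 eqxx.
Qed.

Lemma zvec_delta (a b : nat) (k : 'I_(n1 * n2)) :
  (a < n1)%N -> (b < n2)%N -> k = (a * n2 + b)%N :> nat -> zvec a b = delta_mx 0 k.
Proof.
move=> lt_a lt_b def_k; have def_k' : (a * n2 + b)%R = k by rewrite def_k.
by apply/rowP => k'; rewrite !mxE lt_a lt_b def_k'.
Qed.

Lemma zbr_coord x y (a : 'I_m1) (b : 'I_m2) (k : 'I_(n1 * n2)) :
  (a < n1)%N -> (b < n2)%N -> k = (a * n2 + b)%N :> nat -> zbr x y 0 k = x 0 a * y 0 b.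
Proof.
move=> lt_a lt_b def_k; have zvecE := zvec_coord _ _ lt_a lt_b def_k.
rewrite summxE (bigD1 a) //= [X in _ + X]big1 => [|a' /negPf ne_a]; last first.
  by rewrite summxE big1 // => b' _; rewrite mxE zvecE val_eqE ne_a mulr0.
rewrite addr0 summxE (bigD1 b) //= [X in _ + X]big1 => [|b' /negPf ne_b]; last first.
  by rewrite mxE zvecE !val_eqE ne_b andbF mulr0.
by rewrite addr0 mxE zvecE !eqxx mulr1.
Qed.

Lemma zbr_delta (a : 'I_m1) (b : 'I_m2) : zbr (delta_mx 0 a) (delta_mx 0 b) = zvec a b.
Proof.
rewrite /zbr (bigD1 a) //= [X in _ + X]big1 => [|a' /negPf ne_a]; last first.
  by apply: big1 => b' _; rewrite !mxE ne_a andbF mul0r scale0r.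
rewrite addr0 (bigD1 b) //= [X in _ + X]big1 => [|b' /negPf ne_b]; last first.
  by rewrite !mxE ne_b andbF mulr0 scale0r.
by rewrite !mxE !eqxx mulr1 scale1r addr0.
Qed.

Lemma zbr_tailspanl x y : (x <= tailspan C m1 n1)%MS -> zbr x y = 0.
Proof.
move=> /sub_tailspanP x_head0; apply: big1 => a _; apply: big1 => b _.
case: (ltnP a n1) => [lt_a | le_a]; first by rewrite x_head0 // mul0r scale0r.
by apply/rowP => k; rewrite !mxE (ltnNge a) le_a /= mulr0.
Qed.

Lemma zbr_tailspanr x y : (y <= tailspan C m2 n2)%MS -> zbr x y = 0.
Proof.
move=> /sub_tailspanP y_head0; apply: big1 => a _; apply: big1 => b _.
case: (ltnP b n2) => [lt_b | le_b]; first by rewrite y_head0 // mulr0 scale0r.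
by apply/rowP => k; rewrite !mxE (ltnNge b) le_b andbF /= mulr0.
Qed.

Lemma zbr0l y : zbr 0 y = 0.
Proof. exact/zbr_tailspanl/sub0mx. Qed.

Lemma zbr0r x : zbr x 0 = 0.
Proof. exact/zbr_tailspanr/sub0mx. Qed.

End ZBracket.

Lemma split_lshift p q (i : 'I_p) : split (lshift q i) = inl i.
Proof. exact: (unsplitK (inl i)). Qed.

Lemma split_rshift p q (i : 'I_q) : split (rshift p i) = inr i.
Proof. exact: (unsplitK (inr i)). Qed.

Section ProductBracket.
Variables (C : fieldType) (m1 m2 n1 n2 : nat) (L1 : lie_str C m1) (L2 : lie_str C m2).
Local Notation m := (m1 + m2 + n1 * n2)%N.
Local Notation L := (prodgen n1 n2 L1 L2).
Local Notation blk3 := (@blk3 C m1 m2 n1 n2 _).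
Local Notation idx1 := (@idx1 m1 m2 n1 n2).
Local Notation idx2 := (@idx2 m1 m2 n1 n2).
Local Notation idx3 := (@idx3 m1 m2 n1 n2).
Local Notation zbr := (@zbr C m1 m2 n1 n2).

Lemma prodgen11 a b : L (idx1 a) (idx1 b) = blk3 (L1 a b) 0 0.
Proof. by rewrite /prodgen !split_lshift. Qed.

Lemma prodgen22 a b : L (idx2 a) (idx2 b) = blk3 0 (L2 a b) 0.
Proof. by rewrite /prodgen !split_lshift !split_rshift. Qed.

Lemma prodgen12 a b : L (idx1 a) (idx2 b) = blk3 0 0 (zvec C n1 n2 a b).
Proof. by rewrite /prodgen !split_lshift split_rshift /blk3 row_mx0. Qed.

Lemma prodgen21 b a : L (idx2 b) (idx1 a) = - blk3 0 0 (zvec C n1 n2 a b).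
Proof. by rewrite /prodgen !split_lshift split_rshift /blk3 row_mx0. Qed.

Lemma prodgen3l c j : L (idx3 c) j = 0.
Proof. by rewrite /prodgen split_rshift. Qed.

Lemma prodgen3r i c : L i (idx3 c) = 0.
Proof. by rewrite /prodgen split_rshift; case: (split i) => // ?; case: split. Qed.

Lemma sum_idx (V : nmodType) (F : 'I_m -> V) :
  \sum_(i < m) F i =
  \sum_(a < m1) F (idx1 a) + \sum_(b < m2) F (idx2 b) + \sum_(c < n1 * n2) F (idx3 c).
Proof. by rewrite !big_split_ord. Qed.

Lemma blk3_sum2 (I J : finType) (F : I -> J -> 'rV_m1) G H :
  \sum_i \sum_j blk3 (F i j) (G i j) (H i j) =
  blk3 (\sum_i \sum_j F i j) (\sum_i \sum_j G i j) (\sum_i \sum_j H i j).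
Proof. by under eq_bigr do rewrite blk3_sum; rewrite blk3_sum. Qed.

Section BracketBlocks.
Variables (x x' : 'rV[C]_m1) (y y' : 'rV[C]_m2) (z z' : 'rV[C]_(n1 * n2)).
Let u := blk3 x y z.
Let v := blk3 x' y' z'.

Lemma lbr_block11 :
  \sum_(i < m1) \sum_(j < m1) (u 0 (idx1 i) * v 0 (idx1 j)) *: L (idx1 i) (idx1 j) =
  blk3 (lbr L1 x x') 0 0.
Proof.
transitivity (\sum_i \sum_j blk3 ((x 0 i * x' 0 j) *: L1 i j) 0 0).
  by apply: eq_bigr => i _; apply: eq_bigr => j _; rewrite !blk3_idx1 prodgen11 blk3Z !scaler0.
by rewrite blk3_sum2 !big1_eq.
Qed.

Lemma lbr_block22 :
  \sum_(i < m2) \sum_(j < m2) (u 0 (idx2 i) * v 0 (idx2 j)) *: L (idx2 i) (idx2 j) =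
  blk3 0 (lbr L2 y y') 0.
Proof.
transitivity (\sum_i \sum_j blk3 0 ((y 0 i * y' 0 j) *: L2 i j) 0).
  by apply: eq_bigr => i _; apply: eq_bigr => j _; rewrite !blk3_idx2 prodgen22 blk3Z !scaler0.
by rewrite blk3_sum2 !big1_eq.
Qed.

Lemma lbr_block12 :
  \sum_(i < m1) \sum_(j < m2) (u 0 (idx1 i) * v 0 (idx2 j)) *: L (idx1 i) (idx2 j) =
  blk3 0 0 (zbr x y').
Proof.
transitivity (\sum_i \sum_j blk3 0 0 ((x 0 i * y' 0 j) *: zvec C n1 n2 i j)).
  apply: eq_bigr => i _; apply: eq_bigr => j _.
  by rewrite blk3_idx1 blk3_idx2 prodgen12 blk3Z !scaler0.
by rewrite blk3_sum2 !big1_eq.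
Qed.

Lemma lbr_block21 :
  \sum_(i < m2) \sum_(j < m1) (u 0 (idx2 i) * v 0 (idx1 j)) *: L (idx2 i) (idx1 j) =
  blk3 0 0 (- zbr x' y).
Proof.
transitivity (\sum_i \sum_j blk3 0 0 (- ((x' 0 j * y 0 i) *: zvec C n1 n2 j i))).
  apply: eq_bigr => i _; apply: eq_bigr => j _.
  by rewrite blk3_idx1 blk3_idx2 prodgen21 scalerN blk3Z blk3N !scaler0 !oppr0 mulrC.
rewrite blk3_sum2 !big1_eq exchange_big /= -sumrN.
by congr blk3; apply: eq_bigr => i _; rewrite sumrN.
Qed.

Lemma lbr_block3l p (f : 'I_p -> 'I_m) :
  \sum_(i < n1 * n2) \sum_(j < p) (u 0 (idx3 i) * v 0 (f j)) *: L (idx3 i) (f j) = 0.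
Proof. by apply: big1 => i _; apply: big1 => j _; rewrite prodgen3l scaler0. Qed.

Lemma lbr_block3r p (f : 'I_p -> 'I_m) :
  \sum_(i < p) \sum_(j < n1 * n2) (u 0 (f i) * v 0 (idx3 j)) *: L (f i) (idx3 j) = 0.
Proof. by apply: big1 => i _; apply: big1 => j _; rewrite prodgen3r scaler0. Qed.

End BracketBlocks.

Lemma lbr_blk3 x y z x' y' z' :
  lbr L (blk3 x y z) (blk3 x' y' z') =
  blk3 (lbr L1 x x') (lbr L2 y y') (zbr x y' - zbr x' y).
Proof.
rewrite /Defs.lbr sum_idx.
under eq_bigr do rewrite sum_idx.
under [X in _ + X + _]eq_bigr do rewrite sum_idx.
under [X in _ + X]eq_bigr do rewrite sum_idx.
rewrite !big_split /= lbr_block11 lbr_block22 lbr_block12 lbr_block21.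
by rewrite !lbr_block3l !lbr_block3r !addr0 !blk3D !addr0 !add0r.
Qed.

End ProductBracket.

Section ProductLie.
Variables (C : fieldType) (m1 m2 n1 n2 : nat) (L1 : lie_str C m1) (L2 : lie_str C m2).
Hypotheses (lcs1_tail : (lcs L1 1 <= tailspan C m1 n1)%MS).
Hypotheses (lcs2_tail : (lcs L2 1 <= tailspan C m2 n2)%MS).
Local Notation m := (m1 + m2 + n1 * n2)%N.
Local Notation L := (prodgen n1 n2 L1 L2).
Local Notation blk3 := (@blk3 C m1 m2 n1 n2 _).
Local Notation zbr := (@zbr C m1 m2 n1 n2).
Local Notation emb1 := (emb1 C m1 m2 n1 n2).
Local Notation emb2 := (emb2 C m1 m2 n1 n2).
Local Notation prj1 := (prj1 C m1 m2 n1 n2).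
Local Notation prj2 := (prj2 C m1 m2 n1 n2).
Local Notation prj3 := (prj3 C m1 m2 n1 n2).

Lemma lbr_emb1 x x' : lbr L (x *m emb1) (x' *m emb1) = lbr L1 x x' *m emb1.
Proof. by rewrite !mul_emb1 lbr_blk3 lbr0r !zbr0r subrr. Qed.

Lemma lbr_emb2 y y' : lbr L (y *m emb2) (y' *m emb2) = lbr L2 y y' *m emb2.
Proof. by rewrite !mul_emb2 lbr_blk3 lbr0r !zbr0l subrr. Qed.

Lemma lbr_prj u v : lbr L u v =
  blk3 (lbr L1 (u *m prj1) (v *m prj1)) (lbr L2 (u *m prj2) (v *m prj2))
       (zbr (u *m prj1) (v *m prj2) - zbr (v *m prj1) (u *m prj2)).
Proof. by rewrite -{1}[u]blk3_prjK -{1}[v]blk3_prjK lbr_blk3. Qed.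

Lemma lbr_prj1 u v : lbr L1 (u *m prj1) (v *m prj1) = lbr L u v *m prj1.
Proof. by rewrite lbr_prj blk3_prj1. Qed.

Lemma lbr_prj2 u v : lbr L2 (u *m prj2) (v *m prj2) = lbr L u v *m prj2.
Proof. by rewrite lbr_prj blk3_prj2. Qed.

Lemma zbr_lbrl x x' y : zbr (lbr L1 x x') y = 0.
Proof. by apply/zbr_tailspanl/(submx_trans _ lcs1_tail)/lbr_sub_brsp; rewrite submx1. Qed.

Lemma zbr_lbrr x y y' : zbr x (lbr L2 y y') = 0.
Proof. by apply/zbr_tailspanr/(submx_trans _ lcs2_tail)/lbr_sub_brsp; rewrite submx1. Qed.

Lemma is_lie_prodgen : is_lie L1 -> is_lie L2 -> is_lie L.
Proof.
move=> [alt1 jacobi1] [alt2 jacobi2]; split=> [u | u v w].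
  by rewrite lbr_prj alt1 alt2 subrr blk30.
rewrite [lbr L u _]lbr_prj [lbr L v (lbr L w u)]lbr_prj [lbr L w (lbr L u v)]lbr_prj.
rewrite -!lbr_prj1 -!lbr_prj2.
by rewrite !zbr_lbrl !zbr_lbrr !blk3D jacobi1 jacobi2 !subrr !addr0 blk30.
Qed.

Lemma lcs1_prj1 : (lcs L 1 *m prj1 <= tailspan C m1 n1)%MS.
Proof. exact: submx_trans (lcs_morph lbr_prj1 1) lcs1_tail. Qed.

Lemma lcs1_prj2 : (lcs L 1 *m prj2 <= tailspan C m2 n2)%MS.
Proof. exact: submx_trans (lcs_morph lbr_prj2 1) lcs2_tail. Qed.

Lemma lcs2_prj3 : lcs L 2 *m prj3 = 0.
Proof.
apply/eqP; rewrite -submx0; apply: brspMr_sub => u v _ sv.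
have v1 : (v *m prj1 <= tailspan C m1 n1)%MS := submx_trans (submxMr prj1 sv) lcs1_prj1.
have v2 : (v *m prj2 <= tailspan C m2 n2)%MS := submx_trans (submxMr prj2 sv) lcs1_prj2.
by rewrite lbr_prj blk3_prj3 zbr_tailspanr // zbr_tailspanl // subrr sub0mx.
Qed.

Lemma lcs_prodgen_eq0 k :
  (2 <= k)%N -> lcs L1 k = 0 -> lcs L2 k = 0 -> lcs L k = 0.
Proof.
move=> le2k lcs1k0 lcs2k0; rewrite -[lcs L k]blk3_prjK.
have /eqP -> : lcs L k *m prj1 == 0 by rewrite -submx0 -lcs1k0 (lcs_morph lbr_prj1).
have /eqP -> : lcs L k *m prj2 == 0 by rewrite -submx0 -lcs2k0 (lcs_morph lbr_prj2).
have : (lcs L k *m prj3 <= lcs L 2 *m prj3)%MS by rewrite submxMr // lcs_sub.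
by rewrite lcs2_prj3 => /submx0null ->; rewrite blk30.
Qed.

Lemma nilpotent_prodgen : nilpotent L1 -> nilpotent L2 -> nilpotent L.
Proof.
move=> [k1 lcs1k0] [k2 lcs2k0]; exists (k1 + k2).+2.
apply/eqP; rewrite mxrank_eq0; apply/eqP/lcs_prodgen_eq0 => //.
  by apply: lcs_eq0_leq lcs1k0 _; lia.
by apply: lcs_eq0_leq lcs2k0 _; lia.
Qed.

Lemma nilindex_prodgen k1 k2 : nonabelian L1 ->
  is_nilindex L1 k1 -> is_nilindex L2 k2 -> is_nilindex L (maxn k1 k2).
Proof.
move=> nonab1 [lcs1k0 lcs1_nz] [lcs2k0 lcs2_nz].
have ge2_k1 : (2 <= k1)%N.
  rewrite ltnNge; apply: contra nonab1 => le_k1.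
  by rewrite -leqn0 -[X in (_ <= X)%N]lcs1k0 mxrankS ?lcs_sub.
split.
  apply/eqP; rewrite mxrank_eq0; apply/eqP/lcs_prodgen_eq0.
  - exact: leq_trans ge2_k1 (leq_maxl _ _).
  - exact: lcs_eq0_leq lcs1k0 (leq_maxl _ _).
  - exact: lcs_eq0_leq lcs2k0 (leq_maxr _ _).
move=> j; rewrite leq_max -!lt0n => /orP[lt_j1 | lt_j2].
  rewrite (leq_trans _ (mxrankS (lcs_morph lbr_emb1 j))) // mxrankMfree ?row_free_emb1 //.
  by rewrite lt0n lcs1_nz.
rewrite (leq_trans _ (mxrankS (lcs_morph lbr_emb2 j))) // mxrankMfree ?row_free_emb2 //.
by rewrite lt0n lcs2_nz.
Qed.

End ProductLie.

Lemma partition_of_unity_eq0 (C : fieldType) (s t y : C) : s + t = 1 -> s * - y = t * y -> y = 0.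
Proof. by move=> st1 e; rewrite -[y]mul1r -st1 mulrDl -e mulrN addrN. Qed.

Section ProductNonsplit.
Variables (C : fieldType) (m1 m2 n1 n2 : nat) (L1 : lie_str C m1) (L2 : lie_str C m2).
Local Notation m := (m1 + m2 + n1 * n2)%N.
Local Notation L := (prodgen n1 n2 L1 L2).
Local Notation blk3 := (@blk3 C m1 m2 n1 n2 _).
Local Notation idx1 := (@idx1 m1 m2 n1 n2).
Local Notation idx2 := (@idx2 m1 m2 n1 n2).

Definition head_minors (I J : 'M[C]_m) : Prop :=
  forall (u v : 'rV[C]_m) (a : 'I_m1) (b : 'I_m2),
  (u <= I)%MS -> (v <= J)%MS -> (a < n1)%N -> (b < n2)%N ->
  u 0 (idx1 a) * v 0 (idx2 b) = v 0 (idx1 a) * u 0 (idx2 b).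

Definition heads0 (v : 'rV[C]_m) : Prop :=
  (forall a : 'I_m1, (a < n1)%N -> v 0 (idx1 a) = 0) /\
  (forall b : 'I_m2, (b < n2)%N -> v 0 (idx2 b) = 0).

Lemma head_minorsC I J : head_minors I J -> head_minors J I.
Proof. by move=> minIJ u v a b sJu sIv lt_a lt_b; rewrite (minIJ v u). Qed.

Lemma head_minors_gen1_split I J (i j : 'rV[C]_m) (a0 : 'I_m1) :
  head_minors I J -> (i <= I)%MS -> (j <= J)%MS -> (a0 < n1)%N ->
  i + j = blk3 (delta_mx 0 a0) 0 0 ->
  [/\ i 0 (idx1 a0) + j 0 (idx1 a0) = 1,
      forall b : 'I_m2, (b < n2)%N -> i 0 (idx2 b) = 0 &
      forall b : 'I_m2, (b < n2)%N -> j 0 (idx2 b) = 0].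
Proof.
move=> minIJ sIi sJj lt_a0 e; have coord k : i 0 k + j 0 k = (i + j) 0 k by rewrite mxE.
have sum_x : i 0 (idx1 a0) + j 0 (idx1 a0) = 1 by rewrite coord e blk3_idx1 mxE !eqxx.
have sum_y (b : 'I_m2) : j 0 (idx2 b) = - i 0 (idx2 b).
  by apply/eqP; rewrite -addr_eq0 addrC coord e blk3_idx2 mxE.
have i_y0 (b : 'I_m2) : (b < n2)%N -> i 0 (idx2 b) = 0.
  by move=> lt_b; apply: (partition_of_unity_eq0 sum_x); rewrite -sum_y; apply: minIJ.
by split=> // b lt_b; rewrite sum_y i_y0 ?oppr0.
Qed.

Lemma head_minors_gen2_split I J (i j : 'rV[C]_m) (b0 : 'I_m2) :
  head_minors I J -> (i <= I)%MS -> (j <= J)%MS -> (b0 < n2)%N ->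
  i + j = blk3 0 (delta_mx 0 b0) 0 ->
  [/\ i 0 (idx2 b0) + j 0 (idx2 b0) = 1,
      forall a : 'I_m1, (a < n1)%N -> i 0 (idx1 a) = 0 &
      forall a : 'I_m1, (a < n1)%N -> j 0 (idx1 a) = 0].
Proof.
move=> minIJ sIi sJj lt_b0 e; have coord k : i 0 k + j 0 k = (i + j) 0 k by rewrite mxE.
have sum_y : i 0 (idx2 b0) + j 0 (idx2 b0) = 1 by rewrite coord e blk3_idx2 mxE !eqxx.
have sum_x (a : 'I_m1) : j 0 (idx1 a) = - i 0 (idx1 a).
  by apply/eqP; rewrite -addr_eq0 addrC coord e blk3_idx1 mxE.
have i_x0 (a : 'I_m1) : (a < n1)%N -> i 0 (idx1 a) = 0.
  move=> lt_a; apply: (partition_of_unity_eq0 sum_y).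
  by rewrite -sum_x mulrC [RHS]mulrC; symmetry; apply: minIJ.
by split=> // a lt_a; rewrite sum_x i_x0 ?oppr0.
Qed.

Lemma heads0_of_pure_heads I J (u u' : 'rV[C]_m) (a0 : 'I_m1) (b0 : 'I_m2) :
  head_minors I J -> (u <= I)%MS -> (u' <= I)%MS -> (a0 < n1)%N -> (b0 < n2)%N ->
  u 0 (idx1 a0) != 0 -> (forall b : 'I_m2, (b < n2)%N -> u 0 (idx2 b) = 0) ->
  u' 0 (idx2 b0) != 0 -> (forall a : 'I_m1, (a < n1)%N -> u' 0 (idx1 a) = 0) ->
  forall v, (v <= J)%MS -> heads0 v.
Proof.
move=> minIJ sIu sIu' lt_a0 lt_b0 nz_u y_u0 nz_u' x_u'0 v sJv; split=> [a lt_a | b lt_b].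
  have := minIJ _ _ _ _ sIu' sJv lt_a lt_b0; rewrite x_u'0 // mul0r => /esym/eqP.
  by rewrite mulf_eq0 (negPf nz_u') orbF => /eqP.
have := minIJ _ _ _ _ sIu sJv lt_a0 lt_b; rewrite y_u0 // mulr0 => /eqP.
by rewrite mulf_eq0 (negPf nz_u) => /eqP.
Qed.

Local Notation zbr := (@zbr C m1 m2 n1 n2).
Local Notation emb1 := (emb1 C m1 m2 n1 n2).
Local Notation emb2 := (emb2 C m1 m2 n1 n2).
Local Notation emb3 := (emb3 C m1 m2 n1 n2).
Local Notation prj1 := (prj1 C m1 m2 n1 n2).
Local Notation prj2 := (prj2 C m1 m2 n1 n2).
Local Notation prj3 := (prj3 C m1 m2 n1 n2).

Lemma lbr_eq0_head_minor u v (a : 'I_m1) (b : 'I_m2) : lbr L u v = 0 ->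
  (a < n1)%N -> (b < n2)%N -> u 0 (idx1 a) * v 0 (idx2 b) = v 0 (idx1 a) * u 0 (idx2 b).
Proof.
move=> uv0 lt_a lt_b; have lt_k : (a * n2 + b < n1 * n2)%N by nia.
have := congr1 (fun w => (w *m prj3) 0 (Ordinal lt_k)) uv0.
rewrite lbr_prj blk3_prj3 mul0mx !mxE !(zbr_coord _ _ lt_a lt_b) //.
by rewrite !prj1_idx !prj2_idx => /eqP; rewrite subr_eq0 => /eqP.
Qed.

Hypotheses (le_n1m1 : (n1 <= m1)%N) (le_n2m2 : (n2 <= m2)%N).

Lemma emb3_lcs1 : (emb3 <= lcs L 1)%MS.
Proof.
apply/row_subP => k; rewrite rowE mul_emb3.
have n2_gt0 : (0 < n2)%N by case: n2 k => [|//] [k]; rewrite muln0.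
have lt_a : (k %/ n2 < n1)%N by rewrite ltn_divLR // mulnC.
have lt_b : (k %% n2 < n2)%N by rewrite ltn_pmod.
pose a := Ordinal (leq_trans lt_a le_n1m1); pose b := Ordinal (leq_trans lt_b le_n2m2).
have -> : delta_mx 0 k = zbr (delta_mx 0 a) (delta_mx 0 b).
  by rewrite zbr_delta (@zvec_delta C _ _ _ _ k lt_a lt_b) // -divn_eq.
have -> : blk3 0 0 (zbr (delta_mx 0 a) (delta_mx 0 b)) =
    lbr L (blk3 (delta_mx 0 a) 0 0) (blk3 0 (delta_mx 0 b) 0).
  by rewrite lbr_blk3 lbr0r lbr0l zbr0l subr0.
by apply: lbr_sub_brsp; rewrite submx1.
Qed.

Hypotheses (tail1_lcs1 : (tailspan C m1 n1 <= lcs L1 1)%MS).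
Hypotheses (tail2_lcs1 : (tailspan C m2 n2 <= lcs L2 1)%MS).

Lemma heads0_lcs1 v : heads0 v -> (v <= lcs L 1)%MS.
Proof.
move=> [x_v0 y_v0]; rewrite -[v]blk3_prjK blk3_emb.
have sx : (v *m prj1 <= lcs L1 1)%MS.
  by apply/(submx_trans _ tail1_lcs1)/sub_tailspanP => a lt_a; rewrite prj1_idx x_v0.
have sy : (v *m prj2 <= lcs L2 1)%MS.
  by apply/(submx_trans _ tail2_lcs1)/sub_tailspanP => b lt_b; rewrite prj2_idx y_v0.
rewrite !addmx_sub //.
- exact: submx_trans (submxMr emb1 sx) (lcs_morph (@lbr_emb1 _ _ _ _ _ _ L2) 1).
- exact: submx_trans (submxMr emb2 sy) (lcs_morph (@lbr_emb2 _ _ _ _ _ L1 _) 1).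
exact: submx_trans (submxMl _ _) emb3_lcs1.
Qed.

Hypotheses (n1_gt0 : (0 < n1)%N) (n2_gt0 : (0 < n2)%N).

Section ComplementHeads.
Variables (I J : 'M[C]_m).
Hypotheses (lieL : is_lie L) (idI : ideal L I) (idJ : ideal L J).
Hypotheses (capIJ : (I :&: J)%MS = 0) (fullIJ : row_full (I + J)%MS).

(* Decompose X_a0 = i + j and X'_b0 = i' + j' along I + J: by the minors,
   i and j have no g2-heads, i' and j' no g1-heads, and either i, i' or j, j'
   have nonzero heads at a0 and b0. *)
Lemma complement_heads0 :
  (forall v, (v <= I)%MS -> heads0 v) \/ (forall v, (v <= J)%MS -> heads0 v).
Proof.
have minIJ : head_minors I J.
  move=> u v a b sIu sJv.
  exact/lbr_eq0_head_minor/(lbr_complement lieL idI idJ capIJ sIu sJv).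
have minJI := head_minorsC minIJ.
pose a0 : 'I_m1 := Ordinal (leq_trans n1_gt0 le_n1m1).
pose b0 : 'I_m2 := Ordinal (leq_trans n2_gt0 le_n2m2).
have [lt_a0 lt_b0] : (a0 < n1)%N /\ (b0 < n2)%N by [].
have /sub_addsmxP[[p q] /= e1] := submx_full (blk3 (delta_mx 0 a0) 0 0 : 'rV_m) fullIJ.
have /sub_addsmxP[[p' q'] /= e2] := submx_full (blk3 0 (delta_mx 0 b0) 0 : 'rV_m) fullIJ.
set i := p *m I in e1; set j := q *m J in e1; set i' := p' *m I in e2; set j' := q' *m J in e2.
have [sIi sJj sIi' sJj'] : [/\ i <= I, j <= J, i' <= I & j' <= J]%MS by rewrite !submxMl.
have [sum_x y_i0 y_j0] := head_minors_gen1_split minIJ sIi sJj lt_a0 (esym e1).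
have [sum_y' x_i'0 x_j'0] := head_minors_gen2_split minIJ sIi' sJj' lt_b0 (esym e2).
have [x_i0 | nz_xi] := eqVneq (i 0 (idx1 a0)) 0.
  have x_j1 : j 0 (idx1 a0) = 1 by rewrite -sum_x x_i0 add0r.
  have y_i'0 : i' 0 (idx2 b0) = 0.
    by move: (minIJ _ _ _ _ sIi' sJj lt_a0 lt_b0); rewrite x_i'0 // mul0r x_j1 mul1r => /esym.
  have y_j'1 : j' 0 (idx2 b0) = 1 by rewrite -sum_y' y_i'0 add0r.
  left; apply: (heads0_of_pure_heads minJI sJj sJj' lt_a0 lt_b0) => //.
    by rewrite x_j1 oner_neq0.
  by rewrite y_j'1 oner_neq0.
have y_j'0 : j' 0 (idx2 b0) = 0.
  move: (minIJ _ _ _ _ sIi sJj' lt_a0 lt_b0); rewrite x_j'0 // mul0r => /eqP.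
  by rewrite mulf_eq0 (negPf nz_xi) => /eqP.
have y_i'1 : i' 0 (idx2 b0) = 1 by rewrite -sum_y' y_j'0 addr0.
right; apply: (heads0_of_pure_heads minIJ sIi sIi' lt_a0 lt_b0) => //.
by rewrite y_i'1 oner_neq0.
Qed.

End ComplementHeads.

Lemma nonsplit_prodgen : is_lie L -> nilpotent L -> nonsplit L.
Proof.
move=> lieL nilL [I [J [idI idJ nzI nzJ [/eqP capIJ0 fullIJ]]]].
have capIJ : (I :&: J)%MS = 0 by apply/eqP; rewrite -mxrank_eq0.
have capJI : (J :&: I)%MS = 0 by rewrite capmxC.
have fullJI : row_full (J + I)%MS by rewrite addsmxC.
have heads0_lcs1_sub K : (forall v, (v <= K)%MS -> heads0 v) -> (K <= lcs L 1)%MS.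
  by move=> heads0K; apply/row_subP => k; apply/heads0_lcs1/heads0K/row_sub.
case: (complement_heads0 lieL idI idJ capIJ fullIJ) => /heads0_lcs1_sub sub_lcs1.
  by move: nzI; rewrite (derived_summand_eq0 lieL idJ idI capJI fullJI nilL) ?mxrank0.
by move: nzJ; rewrite (derived_summand_eq0 lieL idI idJ capIJ fullIJ nilL) ?mxrank0.
Qed.

End ProductNonsplit.

Lemma nonabelian_generators_gt0 (C : fieldType) m n (L : lie_str C m) :
  generates L (headspan C m n) -> nonabelian L -> (0 < n)%N.
Proof.
case: n => // gen0 nonab.
have full0 : row_full (0 : 'M[C]_m).
  apply: gen0 => [|u v]; first by rewrite submx0; apply/eqP/matrixP => i j; rewrite !mxE andbF.
  by rewrite !submx0 => /eqP-> _; rewrite lbr0l.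
move: nonab; rewrite /nonabelian -lt0n ltnNge (leq_trans (rank_leq_col _)) //.
by move: full0; rewrite /row_full mxrank0 => /eqP <-.
Qed.

Theorem mainTheorem4 (C : numClosedFieldType) (m1 m2 n1 n2 : nat)
    (L1 : lie_str C m1) (L2 : lie_str C m2) :
  is_lie L1 -> nilpotent L1 -> nonabelian L1 ->
  is_lie L2 -> nilpotent L2 -> nonabelian L2 ->
  (n1 <= m1)%N -> (n2 <= m2)%N ->
  generates L1 (headspan C m1 n1) -> (lcs L1 1 == tailspan C m1 n1)%MS ->
  generates L2 (headspan C m2 n2) -> (lcs L2 1 == tailspan C m2 n2)%MS ->
  nonsplit L1 -> nonsplit L2 ->
  let L := prodgen n1 n2 L1 L2 in
  is_lie L /\ nonsplit L /\
  forall k1 k2, is_nilindex L1 k1 -> is_nilindex L2 k2 ->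
    is_nilindex L (maxn k1 k2).
Proof.
move=> lie1 nil1 nonab1 lie2 nil2 nonab2 le_n1m1 le_n2m2 gen1 /andP[lcs1_tail tail_lcs1].
move=> gen2 /andP[lcs2_tail tail_lcs2].
move=> _ _ L.
have lieL : is_lie L := is_lie_prodgen lcs1_tail lcs2_tail lie1 lie2.
have nilL : nilpotent L := nilpotent_prodgen lcs1_tail lcs2_tail nil1 nil2.
have n1_gt0 := nonabelian_generators_gt0 gen1 nonab1.
have n2_gt0 := nonabelian_generators_gt0 gen2 nonab2.
split=> //; split; first exact: nonsplit_prodgen.
by move=> k1 k2; apply: nilindex_prodgen.
Qed.
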